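(* Let $p\geq1$, let $G$ be a discrete group with identity $e$, let $a\in G$, and let $\mu$ be a left Haar measure on $G$ with $\mu(\{e\})\geq 1$. Let $(\gamma_n)_n$ be an unbounded sequence of non-negative integers and let $w:G\to(0,\infty)$ be a bounded function. Suppose there are a finite nonempty set $F\subseteq G$ and $N>0$ such that $a^{\gamma_n}F\cap F=\varnothing$ for all $n\geq N$ and $$\beta:=\inf\Big\{\prod_{k=1}^{\gamma_n}w(a^k t):\ n\geq N,\ t\in F\Big\}>0.$$ Then the set $$\Lambda:=\big\{f\in L^p(G,\mu):\ \|T_{a,w,p}^{\gamma_n}f-\chi_F\|_p\geq\mu(F)^{1/p}\ \text{ for all } n\geq N\big\}$$ is not $\sigma$-porous in $L^p(G,\mu)$.
   Context: For $a\in G$ and a bounded weight $w:G\to(0,\infty)$, the weighted translation operator $T_{a,w,p}:L^p(G,\mu)\to L^p(G,\mu)$ is $(T_{a,w,p}f)(x)=w(x)\,f(a^{-1}x)$; $T_{a,w,p}^n$ denotes its $n$-th power ($T^0=I$). Porosity: Let $X$ be a metric space and $0<\lambda<1$. A set $E\subseteq X$ is $\lambda$-porous at $x\in E$ if for each $\delta>0$ there is $y\in B(x;\delta)\setminus\{x\}$ with $B(y;\lambda\, d(x,y))\cap E=\varnothing$; $E$ is $\lambda$-porous if it is $\lambda$-porous at each of its points; $E$ is $\sigma$-$\lambda$-porous if it is a countable union of $\lambda$-porous subsets of $X$. A set is called $\sigma$-porous if it is $\sigma$-$\lambda$-porous for some $\lambda\in(0,1)$; ''not $\sigma$-porous'' means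 not $\sigma$-$\lambda$-porous for any $\lambda\in(0,1)$. *)

From HB Require Import structures.
From mathcomp Require Import all_boot all_order all_algebra.
From mathcomp Require Import all_classical all_reals all_analysis.
Set Implicit Arguments. Unset Strict Implicit. Unset Printing Implicit Defensive.
Import Order.TTheory GRing.Theory Num.Theory.
Local Open Scope classical_set_scope.
Local Open Scope ring_scope.

(* A group G viewed as a DISCRETE group: all subsets are (Borel) measurable. *)
Definition discrete_group (G : groupType) : Type := G.
HB.instance Definition _ (G : groupType) := Choice.on (discrete_group G).
HB.instance Definition _ (G : groupType) :=
  isPointed.Build (discrete_group G) (1%g : G).
HB.instance Definition _ (G : groupType) :=
  @isMeasurable.Build default_measure_display (discrete_group G)
    discrete_measurable discrete_measurable0
    discrete_measurableC discrete_measurableU.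

(* Left Haar measure on the discrete group G: a nonzero measure on all subsets,
   invariant under left translations, finite on compact (= finite) sets. *)
Definition left_Haar (G : groupType) (R : realType)
    (mu : {measure set (discrete_group G) -> \bar R}) : Prop :=
  [/\ (forall (g : G) (A : set (discrete_group G)),
         mu [set (g * x)%g | x in A] = mu A),
      (forall A : set (discrete_group G), finite_set A -> (mu A < +oo)%E)
    & (0 < mu [set: discrete_group G])%E].

Definition wtrans (G : groupType) (R : realType) (a : G) (w : G -> R)
    (f : discrete_group G -> R) : discrete_group G -> R :=
  fun x => w x * f ((a^-1)%g * x)%g.

(* L^p(G,mu): (measurable, automatic here) real functions with finite p-norm. *)
Definition Lp_set (G : groupType) (R : realType)
    (mu : {measure set (discrete_group G) -> \bar R}) (p : R) :
    set (discrete_group G -> R) :=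
  [set f | ('N[mu]_(p%:E)[EFin \o f] < +oo)%E].

Definition Lp_dist (G : groupType) (R : realType)
    (mu : {measure set (discrete_group G) -> \bar R}) (p : R)
    (f g : discrete_group G -> R) : R :=
  fine ('N[mu]_(p%:E)[EFin \o (f \- g)]).

Definition mball (T : Type) (R : realType) (X : set T) (d : T -> T -> R)
    (x : T) (r : R) : set T := [set y | X y /\ d x y < r].

Definition porous_at (T : Type) (R : realType) (X : set T) (d : T -> T -> R)
    (lam : R) (E : set T) (x : T) : Prop :=
  forall delta : R, 0 < delta ->
    exists y, [/\ y \in mball X d x delta, y <> x &
                  mball X d y (lam * d x y) `&` E = set0].

Definition porous (T : Type) (R : realType) (X : set T) (d : T -> T -> R)
    (lam : R) (E : set T) : Prop :=
  E `<=` X /\ forall x, E x -> porous_at X d lam E x.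

Definition sigma_porous (T : Type) (R : realType) (X : set T)
    (d : T -> T -> R) (lam : R) (E : set T) : Prop :=
  exists Es : nat -> set T,
    (forall n, porous X d lam (Es n)) /\ E = \bigcup_n Es n.

Definition is_sigma_porous (T : Type) (R : realType) (X : set T)
    (d : T -> T -> R) (E : set T) : Prop :=
  exists lam : R, 0 < lam < 1 /\ sigma_porous X d lam E.

From HB Require Import structures.
From mathcomp Require Import all_boot all_order all_algebra.
From mathcomp Require Import all_classical all_reals all_analysis.
From mathcomp Require Import lra.
Import Order.TTheory GRing.Theory Num.Theory.
Import numFieldNormedType.Exports.
Set Implicit Arguments. Unset Strict Implicit. Unset Printing Implicit Defensive.
Local Open Scope classical_set_scope.
Local Open Scope ring_scope.

(* The set Lambda is not sigma-porous because it has nonempty interior, while a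
   sigma-porous subset of L^p(G, mu) has empty interior.

   1. Every point of the discrete group G has mass >= 1 (left invariance and
      mu {e} >= 1), so |f t - g t| <= ||f - g||_p.  Hence L^p-Cauchy sequences
      converge pointwise, and Fatou's lemma turns the pointwise limit into an
      L^p limit (Lp_limit).
   2. A lambda-porous set misses a closed ball of at most half the radius inside
      every ball (porous_hole).  Doing this successively for the pieces E_0,
      E_1, ... of a sigma-porous set gives nested closed balls with radii
      tending to 0 (porous_nested_balls); the limit of their centres lies in
      the first ball and in no E_n (sigma_porous_no_ball): Baire's argument.
   3. With beta the infimum of the weight products and f0 = (1/beta + 1) chi_F,
      every u with ||u - f0||_p < 1 has |u| > 1/beta on F; then
      |T^{gamma_n} u| >= 1 on a^{gamma_n} F, which is disjoint from F, so
      ||T^{gamma_n} u - chi_F||_p^p >= mu(a^{gamma_n} F) = mu(F)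
      (wtrans_escape_norm).  Thus the ball B(f0, 1) lies in Lambda. *)

Lemma halving_small (R : realType) (rho : nat -> R) :
  (forall k, 0 <= rho k) -> (forall k, rho k.+1 <= rho k / 2) ->
  forall e, 0 < e -> exists k, rho k < e.
Proof.
move=> rho_ge0 half e e_gt0.
have decay k : rho k * (k%:R + 1) <= rho 0%N.
  elim: k => [|k IH]; first by rewrite add0r mulr1.
  have k_ge0 : 0 <= k%:R :> R by [].
  have k2_ge0 : 0 <= k%:R + 1 + 1 :> R by lra.
  have := ler_wpM2r k2_ge0 (half k).
  have := mulr_ge0 (rho_ge0 k) k_ge0.
  rewrite -[k.+1%:R]natr1; lra.
have bound_ge0 : 0 <= rho 0%N / e by rewrite divr_ge0 ?rho_ge0 ?ltW.
have := archi_boundP bound_ge0; set K := Num.Def.archi_bound _ => ltK.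
exists K; move: ltK; rewrite ltr_pdivrMr // => ltK.
have := decay K; have := rho_ge0 K; have K_ge0 : 0 <= K%:R :> R by [].
nra.
Qed.

Lemma iter_wtrans (R : realType) (G : groupType) (a : G) (w : G -> R)
    (g : discrete_group G -> R) (m : nat) (t : G) :
  iter m (wtrans a w) g ((a ^+ m) * t)%g =
  (\prod_(1 <= k < m.+1) w ((a ^+ k) * t)%g) * g t.
Proof.
elim: m => [|m IH]; first by rewrite /= big_geq // mul1r expg0 mul1g.
rewrite iterS /wtrans [in RHS]big_nat_recr //= expgS -mulgA mulKg IH.
by rewrite mulrCA mulrA.
Qed.

Lemma Haar_atom_ge1 (R : realType) (G : groupType)
    (mu : {measure set (discrete_group G) -> \bar R}) :
  left_Haar mu -> (1 <= mu [set (1%g : G)])%E ->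
  forall t : discrete_group G, (1 <= mu [set t])%E.
Proof.
by case=> invariant _ _ mu1 t; rewrite -(invariant t) image_set1 mulg1 in mu1.
Qed.

Section LpSpace.
Variables (R : realType) (p : R) (G : groupType).
Variable mu : {measure set (discrete_group G) -> \bar R}.
Hypothesis p_ge1 : 1 <= p.

Local Notation T := (discrete_group G).
Local Notation X := (Lp_set mu p).
Local Notation d := (Lp_dist mu p).
Local Notation Np h := ('N[mu]_(p%:E)[EFin \o (h)%R])%E.

Lemma p_gt0 : 0 < p. Proof. exact: lt_le_trans p_ge1. Qed.

Lemma discrete_measurable_fun (f : T -> R) : measurable_fun [set: T] f.
Proof. by move=> _ Y _. Qed.

Lemma poweR_le_cancel (x y : \bar R) : (0 <= x)%E -> (0 <= y)%E ->
  (x `^ p <= y `^ p)%E -> (x <= y)%E.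
Proof.
move=> x_ge0 y_ge0 xy.
have ip : 0 <= p^-1 by rewrite invr_ge0 ltW // p_gt0.
have := @gt0_ler_poweR _ p^-1 ip (x `^ p)%E (y `^ p)%E.
rewrite !in_itv /= !poweR_ge0 !leey => /(_ isT isT xy).
by rewrite -!poweRrM mulfV ?gt_eqF ?p_gt0 // !poweRe1.
Qed.

Lemma Np_powE (h : T -> R) : (Np h `^ p = \int[mu]_t (`|h t| `^ p)%:E)%E.
Proof. by rewrite poweR_Lnorm ?gt_eqF ?p_gt0. Qed.

Lemma Np_triangle (f g h : T -> R) :
  (Np (f \- h) <= Np (f \- g) + Np (g \- h))%E.
Proof.
have -> : Np (f \- h) = Np ((f \- g) \+ (g \- h)).
  by apply: eq_Lnorm => x /=; rewrite addrA subrK.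
by apply: minkowski_EFin => //; exact: discrete_measurable_fun.
Qed.

Lemma Np_subC (f g : T -> R) : Np (f \- g) = Np (g \- f).
Proof. by rewrite -oppe_Lnorm; apply: eq_Lnorm => x /=; rewrite opprB. Qed.

Lemma Np_sub_lty (f g : T -> R) : X f -> X g -> (Np (f \- g) < +oo)%E.
Proof.
move=> Xf Xg.
have Np_opp : Np (\- g) = Np g.
  by rewrite -oppe_Lnorm; apply: eq_Lnorm => x /=; rewrite opprK.
apply: (@le_lt_trans _ _ (Np f + Np (\- g))%E).
  by apply: minkowski_EFin => //; exact: discrete_measurable_fun.
by rewrite Np_opp lte_add_pinfty.
Qed.

Lemma Lp_distE (f g : T -> R) : X f -> X g -> (d f g)%:E = Np (f \- g).
Proof.
by move=> Xf Xg; rewrite /Lp_dist fineK // ge0_fin_numE ?Lnorm_ge0 ?Np_sub_lty.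
Qed.

Lemma Lp_dist_ge0 (f g : T -> R) : 0 <= d f g.
Proof. exact/fine_ge0/Lnorm_ge0. Qed.

Lemma Lp_dist_self (f : T -> R) : d f f = 0.
Proof.
rewrite /Lp_dist; have -> : Np (f \- f) = ('N[mu]_(p%:E)[cst 0])%E.
  by apply: eq_Lnorm => x /=; rewrite subrr.
by rewrite Lnorm0 // eqe gt_eqF // p_gt0.
Qed.

Lemma Lp_dist_triangle (f g h : T -> R) : X f -> X g -> X h ->
  d f h <= d f g + d g h.
Proof.
by move=> Xf Xg Xh; rewrite -lee_fin EFinD !Lp_distE //; exact: Np_triangle.
Qed.

Lemma Np_ge_on (A : set T) (h : T -> R) : (forall x, A x -> 1 <= `|h x|) ->
  ((mu A) `^ p^-1 <= Np h)%E.
Proof.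
move=> h_ge1; apply: poweR_le_cancel; [exact: poweR_ge0 | exact: Lnorm_ge0 |].
rewrite -poweRrM mulVf ?gt_eqF ?p_gt0 // poweRe1 // Np_powE.
apply: (@le_trans _ _ (\int[mu]_(x in A) (`|h x| `^ p)%:E)%E); last first.
  by apply: (ge0_subset_integral mu) => // x _; rewrite lee_fin powR_ge0.
rewrite -[X in (X <= _)%E]mul1e -integral_cst //.
apply: ge0_le_integral => // x Ax; rewrite lee_fin.
have := @ge0_ler_powR _ p (ltW p_gt0) 1 `|h x|.
by rewrite !nnegrE ler01 normr_ge0 powR1 => /(_ isT isT (h_ge1 x Ax)).
Qed.

Lemma indicator_Lp (A : set T) (K : R) : (mu A < +oo)%E ->
  X (fun x => K * \1_A x).
Proof.
move=> muA; rewrite /Lp_set /=.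
apply: (@lty_poweRy _ _ p); first by rewrite gt_eqF ?p_gt0.
rewrite Np_powE.
have -> : (\int[mu]_x (`|K * \1_A x| `^ p)%:E)%E =
          (\int[mu]_x ((`|K| `^ p) * \1_A x)%:E)%E.
  apply: eq_integral => x _; congr EFin.
  rewrite indicE; case: (x \in A); rewrite ?mulr1 ?mulr0 ?normr0 ?powR0 //.
  by rewrite gt_eqF ?p_gt0.
rewrite (@integralZl_indic _ _ _ _ _ _ (fun _ => A)) //; last first.
  by move=> K0; exfalso; move: K0; rewrite ltNge powR_ge0.
by rewrite integral_indic // setIT; exact: lte_mul_pinfty.
Qed.

Lemma wtrans_escape_norm (a : G) (w : G -> R) (F : set T) (m : nat) (beta : R)
    (g : T -> R) :
  left_Haar mu -> 0 < beta ->
  [set ((a ^+ m) * t)%g | t in F] `&` F = set0 ->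
  (forall t, F t -> beta <= \prod_(1 <= k < m.+1) w ((a ^+ k) * t)%g) ->
  (forall t, F t -> beta^-1 <= `|g t|) ->
  ((mu F) `^ p^-1 <= Np (iter m (wtrans a w) g \- \1_F))%E.
Proof.
case=> invariant _ _ beta_gt0 disj prod_ge g_ge.
rewrite -(invariant (a ^+ m)%g F); apply: Np_ge_on => _ [t Ft <-].
have outF : ~ F ((a ^+ m) * t)%g.
  move=> Fat; suff : ([set ((a ^+ m) * t)%g | t in F] `&` F) ((a ^+ m) * t)%g.
    by rewrite disj.
  by split => //; exists t.
rewrite /= indicE memNset // subr0 iter_wtrans normrM.
rewrite -[leLHS](@mulfV _ beta) ?gt_eqF //.
apply: ler_pM; rewrite ?invr_ge0 ?(ltW beta_gt0) ?g_ge //.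
exact: le_trans (prod_ge t Ft) (ler_norm _).
Qed.

(* y |-> y ^ p is continuous away from 0 (at 0 the limit argument below is
   replaced by nonnegativity). *)
Lemma powR_continuous (c : R) : 0 < c -> {for c, continuous (fun y : R => y `^ p)}.
Proof.
move=> c_gt0; apply: differentiable_continuous; apply/derivable1_diffP.
by apply: derivable_powR; rewrite in_itv /= andbT.
Qed.

Lemma liminf_powR_norm (y : nat -> R) (l v : R) : y @ \oo --> l ->
  ((`|l - v| `^ p)%:E <= limn_einf (fun j => (`|y j - v| `^ p)%:E))%E.
Proof.
move=> yl.
have norm_cvg : (fun j => `|y j - v|) @ \oo --> `|l - v|.
  by apply: cvg_norm; apply: cvgB => //; exact: cvg_cst.
have [->|lv_neq0] := eqVneq `|l - v| 0.
  rewrite powR0 ?gt_eqF ?p_gt0 // limn_einf_lim.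
  apply: lime_ge; first exact: is_cvg_einfs.
  apply: nearW => n; apply: le_ereal_inf_tmp => _ [m /= nm <-].
  by rewrite lee_fin powR_ge0.
have lv_gt0 : 0 < `|l - v| by rewrite lt_neqAle eq_sym lv_neq0 normr_ge0.
have : (fun j => (`|y j - v| `^ p)%:E) @ \oo --> (`|l - v| `^ p)%:E.
  apply: cvg_EFin; first exact: nearW.
  exact: (continuous_cvg _ (powR_continuous lv_gt0) norm_cvg).
by move=> pow_cvg; have [-> _] := cvg_limn_einf_sup pow_cvg.
Qed.

Lemma Np_fatou (z : nat -> T -> R) (x h : T -> R) (k : nat) (rho : R) :
  (forall t, (fun j => z j t) @ \oo --> x t) ->
  (forall j, (k <= j)%N -> (Np (z j \- h) <= rho%:E)%E) ->
  (Np (x \- h) <= rho%:E)%E.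
Proof.
move=> zx z_near.
have rho_ge0 : (0 <= rho%:E)%E.
  by apply: le_trans (z_near k (leqnn k)); exact: Lnorm_ge0.
apply: poweR_le_cancel => //; first exact: Lnorm_ge0.
pose v j t := (`|z j t - h t| `^ p)%:E.
rewrite Np_powE; apply: (@le_trans _ _ (\int[mu]_t limn_einf (v^~ t))%E).
  by apply: ge0_le_integral => // t _; exact: liminf_powR_norm.
apply: le_trans; first apply: (fatou mu measurableT) => //.
  by move=> n t _; rewrite lee_fin powR_ge0.
rewrite limn_einf_lim; apply: lime_le; first exact: is_cvg_einfs.
exists k => // n /= kn.
apply: le_trans; first apply: (@ereal_inf_lbound _ _ (\int[mu]_t v n t)%E).
  by exists n => //=.
rewrite /v -Np_powE.
have := @gt0_ler_poweR _ p (ltW p_gt0) (Np (z n \- h)) (rho%:E).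
by rewrite !in_itv /= Lnorm_ge0 rho_ge0 !leey; apply => //; exact: z_near.
Qed.

Hypothesis atom_ge1 : forall t : T, (1 <= mu [set t])%E.

(* Since each point has mass >= 1, the p-norm dominates every value. *)
Lemma Np_ge_point (h : T -> R) (t : T) : ((`|h t|)%:E <= Np h)%E.
Proof.
apply: poweR_le_cancel => //; first exact: Lnorm_ge0.
rewrite Np_powE.
apply: (@le_trans _ _ (\int[mu]_(x in [set t]) (`|h x| `^ p)%:E)%E); last first.
  by apply: (ge0_subset_integral mu) => // x _; rewrite lee_fin powR_ge0.
have -> : (\int[mu]_(x in [set t]) (`|h x| `^ p)%:E)%E =
          (\int[mu]_(x in [set t]) cst (`|h t| `^ p)%:E x)%E.
  by apply: eq_integral => x; rewrite inE /= => ->.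
rewrite integral_cst //; apply: lee_pemulr => //.
by rewrite lee_fin powR_ge0.
Qed.

Lemma Lp_dist_ge_point (f g : T -> R) (t : T) : X f -> X g ->
  `|f t - g t| <= d f g.
Proof.
by move=> Xf Xg; rewrite -lee_fin Lp_distE //; exact: (Np_ge_point (f \- g)).
Qed.

Lemma Lp_dist_eq0 (f g : T -> R) : X f -> X g -> d f g = 0 -> f = g.
Proof.
move=> Xf Xg fg0; apply/funext => t; apply/eqP.
by rewrite -subr_eq0 -normr_le0 -fg0 Lp_dist_ge_point.
Qed.

(* Completeness of L^p: a sequence whose tail after k stays within rho k of the
   k-th term, with inf rho = 0, has a limit within rho k of every term. *)
Lemma Lp_limit (s : nat -> T -> R) (rho : nat -> R) :
  (forall k, X (s k)) ->
  (forall k j, (k <= j)%N -> d (s k) (s j) <= rho k) ->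
  (forall e, 0 < e -> exists k, rho k < e) ->
  exists2 x, X x & forall k, d (s k) x <= rho k.
Proof.
move=> Xs tail small.
have s_cvg t : cvg ((fun j => s j t) @ \oo).
  apply/cauchy_cvgP; apply: cauchy_exP => e e_gt0.
  have [k rho_k] := small e e_gt0.
  exists (s k t), k => // j /= kj; rewrite /ball /=.
  apply: le_lt_trans (Lp_dist_ge_point t (Xs k) (Xs j)) _.
  exact: le_lt_trans (tail _ _ kj) rho_k.
pose x t := lim ((fun j => s j t) @ \oo).
have x_near k : (Np (x \- s k) <= (rho k)%:E)%E.
  apply: (Np_fatou (z := s) (k := k)) => [t|j kj]; first exact: s_cvg.
  by rewrite Np_subC -Lp_distE // lee_fin; exact: tail.
have Xx : X x.
  have sub0 (h : T -> R) : Np (h \- cst 0) = Np h.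
    by apply: eq_Lnorm => y /=; rewrite subr0.
  have := Np_triangle x (s 0%N) (cst 0); rewrite !sub0 => x_le.
  apply: le_lt_trans x_le _; rewrite lte_add_pinfty ?(Xs 0%N) //.
  exact: le_lt_trans (x_near 0%N) (ltey _).
by exists x => // k; rewrite -lee_fin Lp_distE // Np_subC; exact: x_near.
Qed.

Lemma porous_hole (lam : R) (E : set (T -> R)) : 0 < lam -> porous X d lam E ->
  forall z r, X z -> 0 < r -> exists z' r', [/\ X z', 0 < r', r' <= r / 2,
    d z z' <= r / 2 & forall u, X u -> d z' u <= r' -> ~ E u].
Proof.
move=> lam_gt0 [EX E_porous] z r Xz r_gt0.
have [[x [Ex dzx]]|noE] := pselect (exists x, E x /\ d z x < r / 4); last first.
  exists z, (r / 8); split => //; [lra | lra | rewrite Lp_dist_self; lra |].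
  by move=> u Xu du Eu; apply: noE; exists u; split => //; lra.
have Xx := EX x Ex.
have r4_gt0 : 0 < r / 4 by lra.
have [y [yB yx yE]] := E_porous x Ex (r / 4) r4_gt0.
move: yB; rewrite inE => -[Xy dxy].
have dxy_gt0 : 0 < d x y.
  rewrite lt_neqAle Lp_dist_ge0 andbT; apply/eqP => /esym/(Lp_dist_eq0 Xx Xy) exy.
  by apply: yx; rewrite exy.
have ld_gt0 : 0 < lam * d x y by rewrite mulr_gt0.
exists y, (Num.min (lam * d x y / 2) (r / 4)); split => //.
- by rewrite lt_min r4_gt0 andbT; lra.
- by rewrite ge_min; apply/orP; right; lra.
- by have := Lp_dist_triangle Xz Xx Xy; lra.
move=> u Xu du Eu.
suff : (mball X d y (lam * d x y) `&` E) u by rewrite yE.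
split => //; split => //; apply: (le_lt_trans du).
by rewrite gt_min; apply/orP; left; lra.
Qed.

Lemma porous_nested_balls (lam : R) (Es : nat -> set (T -> R)) (z : T -> R)
    (r : R) :
  0 < lam -> (forall n, porous X d lam (Es n)) -> X z -> 0 < r ->
  exists c : nat -> T -> R, exists rho : nat -> R,
    [/\ c 0%N = z, rho 0%N = r, forall k, X (c k) /\ 0 < rho k,
        forall k, rho k.+1 <= rho k / 2 /\ d (c k) (c k.+1) <= rho k / 2
      & forall k u, X u -> d (c k.+1) u <= rho k.+1 -> ~ Es k u].
Proof.
move=> lam_gt0 Es_porous Xz r_gt0.
have hole (nb : nat * ((T -> R) * R)) : exists b : (T -> R) * R,
    X nb.2.1 -> 0 < nb.2.2 -> [/\ X b.1, 0 < b.2, b.2 <= nb.2.2 / 2,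
      d nb.2.1 b.1 <= nb.2.2 / 2 & forall u, X u -> d b.1 u <= b.2 -> ~ Es nb.1 u].
  case: nb => n [c rho] /=.
  have [[Xc rho_gt0]|not_ball] := pselect (X c /\ 0 < rho).
    have [c' [rho' ?]] := porous_hole lam_gt0 (Es_porous n) Xc rho_gt0.
    by exists (c', rho').
  by exists (c, rho) => Xc rho_gt0; exfalso; exact: not_ball.
have [next next_hole] := choice hole.
pose s := fix s k := if k is k'.+1 then next (k', s k') else (z, r).
have s_ball k : X (s k).1 /\ 0 < (s k).2.
  by elim: k => [|k [Xk rk]] //=; have [] := next_hole (k, s k) Xk rk.
exists (fun k => (s k).1), (fun k => (s k).2); split => // [k|k];
  by have [Xk rk] := s_ball k; have [] := next_hole (k, s k) Xk rk.
Qed.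

Lemma nested_closed_balls (c : nat -> T -> R) (rho : nat -> R) :
  (forall k, X (c k)) ->
  (forall k, rho k.+1 <= rho k / 2 /\ d (c k) (c k.+1) <= rho k / 2) ->
  forall k j u, (k <= j)%N -> X u -> d (c j) u <= rho j -> d (c k) u <= rho k.
Proof.
move=> Xc shrink k j u kj Xu; rewrite -(subnK kj).
elim: (j - k)%N => [//|n IH] du; apply: IH; rewrite addSn in du.
have [rho_half dc_half] := shrink (n + k)%N.
by have := Lp_dist_triangle (Xc (n + k)%N) (Xc (n + k).+1) Xu; lra.
Qed.

Lemma sigma_porous_no_ball (lam : R) (Es : nat -> set (T -> R)) (z : T -> R)
    (r : R) :
  0 < lam -> (forall n, porous X d lam (Es n)) -> X z -> 0 < r ->
  ~ (forall u, X u -> d z u < r -> exists n, Es n u).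
Proof.
move=> lam_gt0 Es_porous Xz r_gt0 covered.
have r2_gt0 : 0 < r / 2 by lra.
have [c [rho [c0 rho0 ball shrink miss]]] :=
  porous_nested_balls lam_gt0 Es_porous Xz r2_gt0.
have Xc k : X (c k) by case: (ball k).
have nested := nested_closed_balls Xc shrink.
have [x Xx near_x] : exists2 x, X x & forall k, d (c k) x <= rho k.
  apply: (Lp_limit Xc) => [k j kj|].
    by apply: nested kj (Xc j) _; rewrite Lp_dist_self; case: (ball j) => _ /ltW.
  apply: halving_small => [k|k]; last by case: (shrink k).
  by case: (ball k) => _ /ltW.
have [n Enx] : exists n, Es n x.
  by apply: covered => //; have := near_x 0%N; rewrite c0 rho0; lra.
exact: miss n x Xx (near_x n.+1) Enx.
Qed.

End LpSpace.

Theorem mainTheorem6 (R : realType) (p : R) (G : groupType) (a : G)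
    (mu : {measure set (discrete_group G) -> \bar R})
    (gamma : nat -> nat) (w : G -> R)
    (F : set (discrete_group G)) (N : nat) :
  1 <= p ->
  left_Haar mu ->
  (1 <= mu [set (1%g : G)])%E ->
  (forall M : nat, exists n, (M <= gamma n)%N) ->
  (forall x, 0 < w x) ->
  (exists M : R, forall x, w x <= M) ->
  finite_set F -> F !=set0 ->
  (0 < N)%N ->
  (forall n, (N <= n)%N -> [set ((a ^+ gamma n) * t)%g | t in F] `&` F = set0) ->
  0 < inf [set b : R | exists n t, [/\ (N <= n)%N, F t &
                 b = \prod_(1 <= k < (gamma n).+1) w ((a ^+ k) * t)%g]] ->
  ~ is_sigma_porous (Lp_set mu p) (Lp_dist mu p)
      [set f | Lp_set mu p f /\
         forall n, (N <= n)%N ->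
           ('N[mu]_(p%:E)[EFin \o (iter (gamma n) (wtrans a w) f \- (\1_F : discrete_group G -> R))%R]
              >= (mu F) `^ p^-1)%E].
Proof.
move=> p_ge1 Haar mu1 _ w_gt0 _ finF _ _ disj beta_gt0
  [lam [/andP[lam_gt0 _] [Es [Es_porous Lambda_eq]]]].
set beta := inf _ in beta_gt0.
have beta_le n t : (N <= n)%N -> F t ->
    beta <= \prod_(1 <= k < (gamma n).+1) w ((a ^+ k) * t)%g.
  move=> Nn Ft; apply: ge_inf; last by exists n, t.
  by exists 0 => _ [m [s [_ _ ->]]]; apply: prodr_ge0 => i _; exact: ltW.
have atoms := Haar_atom_ge1 Haar mu1.
pose f0 := fun x : discrete_group G => (beta^-1 + 1) * \1_F x.
have Xf0 : Lp_set mu p f0.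
  by apply: (indicator_Lp p_ge1); case: Haar => _ fin _; exact: fin.
apply: (sigma_porous_no_ball p_ge1 atoms lam_gt0 Es_porous Xf0 ltr01) => u Xu du.
have [n _ Enu] : (\bigcup_n Es n) u.
  rewrite -Lambda_eq; split => // n Nn.
  apply: (wtrans_escape_norm p_ge1 Haar beta_gt0 (disj n Nn)) => t Ft.
    exact: beta_le.
  have := le_lt_trans (Lp_dist_ge_point p_ge1 atoms t Xf0 Xu) du.
  rewrite /f0 indicE mem_set // mulr1 ltr_norml => /andP[_ ut].
  by apply: le_trans (ler_norm _); lra.
by exists n.
Qed.
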